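(* Let $m:\mathbb{R}^3\to\mathbb{R}$ be given by $$m(\xi_1,\xi_2,\xi_3):=\frac{\xi_3}{(\xi_1^2\xi_2^2+\xi_3^2)^{1/2}}.$$ Then for all multi-indices $\alpha=(\alpha_1,\alpha_2,\alpha_3)$, $$|\partial^\alpha m(\xi)|\lesssim|\xi_1|^{-\alpha_1+\alpha_2}\,|(|\xi_1|\xi_2,\xi_3)|^{-\alpha_2-\alpha_3}$$ (so $m$ is a Fefferman–Pipher multiplier). Moreover, $\partial_{\xi_i}m\notin L^\infty$ for each $i=1,2,3$.
   Context: Here $|(|\xi_1|\xi_2,\xi_3)|=(\xi_1^2\xi_2^2+\xi_3^2)^{1/2}$ denotes the Euclidean norm of the vector $(|\xi_1|\xi_2,\xi_3)\in\mathbb{R}^2$, and the estimate is required at all points where $m$ is smooth (i.e. $(\xi_1\xi_2,\xi_3)\neq0$, $\xi_1\ne0$), with implicit constant depending on $\alpha$. A function satisfying these derivative estimates for all multi-indices is called a Fefferman–Pipher (Zygmund) multiplier. *)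

From HB Require Import structures.
From mathcomp Require Import all_boot all_order all_algebra.
From mathcomp Require Import all_classical all_reals all_analysis.
Set Implicit Arguments. Unset Strict Implicit. Unset Printing Implicit Defensive.
Import Order.TTheory GRing.Theory Num.Theory.
Import numFieldNormedType.Exports.
Local Open Scope ring_scope.

Section Defs.
Variable R : realType.

Definition pt3 := ((R * R) * R)%type.
Definition xi1 (x : pt3) : R := x.1.1.
Definition xi2 (x : pt3) : R := x.1.2.
Definition xi3 (x : pt3) : R := x.2.

Definition e1 : pt3 := ((1, 0), 0).
Definition e2 : pt3 := ((0, 1), 0).
Definition e3 : pt3 := ((0, 0), 1).

(* the norm |(|xi1| xi2, xi3)| = (xi1^2 xi2^2 + xi3^2)^(1/2) *)
Definition rho (x : pt3) : R := Num.sqrt (xi1 x ^+ 2 * xi2 x ^+ 2 + xi3 x ^+ 2).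

Definition m (x : pt3) : R := xi3 x / rho x.

Definition pd (v : pt3) (f : pt3 -> R) : pt3 -> R := 'D_v f.

Definition pdalpha (a1 a2 a3 : nat) (f : pt3 -> R) : pt3 -> R :=
  iter a1 (pd e1) (iter a2 (pd e2) (iter a3 (pd e3) f)).

Definition leb3 := ((@lebesgue_measure R \x @lebesgue_measure R) \x @lebesgue_measure R)%E.

(* f in L^infty means (in particular) f is essentially bounded *)
Definition ess_bounded (f : pt3 -> R) : Prop :=
  exists M : R, {ae leb3, forall x, `|f x| <= M}.
End Defs.

From HB Require Import structures.
From mathcomp Require Import all_boot all_order all_algebra.
From mathcomp Require Import all_classical all_reals all_analysis.
From mathcomp Require Import ring lra zify.
Import Order.TTheory GRing.Theory Num.Theory.
Import numFieldNormedType.Exports.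
Set Implicit Arguments.
Unset Strict Implicit.
Unset Printing Implicit Defensive.
Local Open Scope ring_scope.

(* Write u = xi1 xi2 and v = xi3, so that rho^2 = u^2 + v^2 and m = v / rho.
   On the open set where xi1 <> 0 and rho <> 0, every derivative of m has the
   form P(u, v) xi1^(a2 - a1) / rho^q with P a homogeneous polynomial of degree
   d and d - q = -(a2 + a3): since d u = xi1 d xi2 + (u / xi1) d xi1 and
   d rho = (u d u + v d v) / rho, a derivative in xi3, xi2 or xi1 keeps this
   form, raising q by 2 and the degree of P by 1, 1 or 2 (after multiplying by
   rho^2 = u^2 + v^2).  The bound |P(u, v)| <= C rho^d then gives the estimate.
   For the first derivatives, rho^3 d_i m is u^2, -u v xi1 or -u^2 v / xi1; on a
   box where u and v are of size t and xi1 (for i = 2, 3) or xi2 (for i = 1) is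
   of size 1, these are at least t^2 / 2 while rho < 5 t, so |d_i m| exceeds
   1 / (250 t) on a set of positive measure. *)

Section DirectionalDerivatives.
Variables (R : realType) (V : normedModType R).
Implicit Types (f g : V -> R) (x v : V) (df dg : R).

Lemma derive_line f x v : 'D_1 (fun h : R => f (h *: v + x)) 0 = 'D_v f x.
Proof.
rewrite /derive; set q1 := fun h => h^-1 *: _; set q2 := fun h => h^-1 *: _.
suff -> : q1 = q2 by [].
by apply/funext => h; rewrite /q1 /q2 /= scale0r add0r addr0 [_%:A]mulr1.
Qed.

Lemma is_derive_lineP f x v df :
  is_derive x v f df <-> is_derive (0 : R) 1 (fun h : R => f (h *: v + x)) df.
Proof.
split=> -[fd <-]; split; rewrite ?derive_line //.
- exact: (derivable1P f x v).1.
- exact: (derivable1P f x v).2.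
Qed.

Lemma is_derive_add f g x v df dg : is_derive x v f df -> is_derive x v g dg ->
  is_derive x v (fun y => f y + g y) (df + dg).
Proof. exact: is_deriveD. Qed.

Lemma is_derive_mul f g x v df dg : is_derive x v f df -> is_derive x v g dg ->
  is_derive x v (fun y => f y * g y) (f x * dg + g x * df).
Proof. exact: is_deriveM. Qed.

Lemma is_derive_inv f x v df : is_derive x v f df -> f x != 0 ->
  is_derive x v (fun y => (f y)^-1) (- (f x) ^- 2 * df).
Proof. by move=> [fd <-] fx0; split; [exact: derivableV | rewrite deriveV]. Qed.

Lemma is_derive_expn n f x v df : f x != 0 -> is_derive x v f df ->
  is_derive x v (fun y => f y ^+ n) (n%:R * f x ^+ n / f x * df).
Proof.
move=> fx0 fd; have := is_deriveX n fd; rewrite exprfctE => /is_derive_eq; apply.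
rewrite -[_ *: df]/(_ * df); case: n => [|n]; first by rewrite !mul0r.
by rewrite exprS /=; field.
Qed.

End DirectionalDerivatives.

Section Coordinates.
Variable R : realType.
Implicit Types x w : pt3 R.

Lemma is_derive_xi1 x w : is_derive x w (@xi1 R) (xi1 w).
Proof.
apply/is_derive_lineP; apply: is_derive_eq.
by rewrite /xi1 scale0r add0r addr0 [_%:A]mulr1.
Qed.

Lemma is_derive_xi2 x w : is_derive x w (@xi2 R) (xi2 w).
Proof.
apply/is_derive_lineP; apply: is_derive_eq.
by rewrite /xi2 scale0r add0r addr0 [_%:A]mulr1.
Qed.

Lemma is_derive_xi3 x w : is_derive x w (@xi3 R) (xi3 w).
Proof.
apply/is_derive_lineP; apply: is_derive_eq.
by rewrite /xi3 scale0r add0r addr0 [_%:A]mulr1.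
Qed.

Definition xi12 x := xi1 x * xi2 x.

Lemma is_derive_xi12 x w : is_derive x w xi12 (xi1 x * xi2 w + xi2 x * xi1 w).
Proof. exact: is_derive_mul (is_derive_xi1 x w) (is_derive_xi2 x w). Qed.

Lemma rhoE x : rho x = Num.sqrt (xi12 x ^+ 2 + xi3 x ^+ 2).
Proof. by rewrite /rho exprMn. Qed.

Lemma rho_sqr x : rho x ^+ 2 = xi12 x ^+ 2 + xi3 x ^+ 2.
Proof. by rewrite rhoE sqr_sqrtr // addr_ge0 // sqr_ge0. Qed.

Lemma rho_gt0 x : rho x != 0 -> 0 < rho x.
Proof. by rewrite lt_neqAle eq_sym => ->; rewrite sqrtr_ge0. Qed.

Lemma is_derive_rho x w : rho x != 0 ->
  is_derive x w (@rho R)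
    ((xi12 x * (xi1 x * xi2 w + xi2 x * xi1 w) + xi3 x * xi3 w) / rho x).
Proof.
move=> rx0; pose s y := xi12 y * xi12 y + xi3 y * xi3 y.
have ds : is_derive x w s
    (2 * (xi12 x * (xi1 x * xi2 w + xi2 x * xi1 w) + xi3 x * xi3 w)).
  apply: is_derive_eq; first apply: is_derive_add;
    [exact: is_derive_mul (is_derive_xi12 x w) (is_derive_xi12 x w)
    |exact: is_derive_mul (is_derive_xi3 x w) (is_derive_xi3 x w)|].
  ring.
have s_gt0 : 0 < s (0 *: w + x).
  by rewrite scale0r add0r /s -!expr2 -rho_sqr exprn_gt0 ?rho_gt0.
apply/is_derive_lineP.
have -> : (fun h : R => rho (h *: w + x)) = Num.sqrt \o (fun h => s (h *: w + x)).
  by apply/funext => h; rewrite /= rhoE !expr2.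
have := @is_derive1_comp _ Num.sqrt (fun h : R => s (h *: w + x)) 0 _ _
  (is_derive1_sqrt s_gt0) ((is_derive_lineP _ _ _ _).1 ds).
move/is_derive_eq; apply.
by rewrite scale0r add0r /s -!expr2 -rhoE; field.
Qed.

Lemma continuous_xi1 y : {for y, continuous (@xi1 R)}.
Proof. by apply: cvg_comp cvg_fst cvg_fst. Qed.

Lemma continuous_rho y : {for y, continuous (@rho R)}.
Proof.
have c1 := continuous_xi1 (y := y).
have c2 : {for y, continuous (@xi2 R)} by apply: cvg_comp cvg_fst cvg_snd.
have c3 : {for y, continuous (@xi3 R)} by exact: cvg_snd.
have cs : ((fun z => xi1 z ^+ 2 * xi2 z ^+ 2 + xi3 z ^+ 2) @ y -->
           xi1 y ^+ 2 * xi2 y ^+ 2 + xi3 y ^+ 2)%classic.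
  have -> : (fun z => xi1 z ^+ 2 * xi2 z ^+ 2 + xi3 z ^+ 2) =
            ((@xi1 R \* @xi1 R) \* (@xi2 R \* @xi2 R)) \+ (@xi3 R \* @xi3 R).
    by apply/funext => z; rewrite /= !expr2.
  by rewrite !expr2; apply: cvgD; [apply: cvgM; apply: cvgM | apply: cvgM].
exact: cvg_comp cs (@sqrt_continuous R _).
Qed.

Lemma near_regular x : xi1 x != 0 -> rho x != 0 ->
  \forall z \near x, xi1 z != 0 /\ rho z != 0.
Proof.
move=> x0 r0; near=> z; split; near: z.
- exact: cvgr_neq0 (continuous_xi1 (y := x)) x0.
- exact: cvgr_neq0 (continuous_rho (y := x)) r0.
Unshelve. all: by end_near. Qed.

Lemma derive_eq_regular (f g : pt3 R -> R) w x :
  (forall y, xi1 y != 0 -> rho y != 0 -> f y = g y) ->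
  xi1 x != 0 -> rho x != 0 -> 'D_w f x = 'D_w g x.
Proof.
move=> fg x0 r0; apply: near_eq_derive.
have := near_regular x0 r0; apply: filterS => z [z0 rz0]; exact: fg.
Qed.

End Coordinates.

Section HomogeneousPolynomials.
Variable R : realType.

(* The zero polynomial has every degree, so that the partial derivatives of a
   polynomial of degree [d] always have degree [d - 1]. *)
Inductive hpoly : int -> (R -> R -> R) -> Prop :=
| hpoly0 d : hpoly d (fun _ _ => 0)
| hpoly1 : hpoly 0 (fun _ _ => 1)
| hpolyD d f g : hpoly d f -> hpoly d g -> hpoly d (fun a b => f a b + g a b)
| hpolyZ d c f : hpoly d f -> hpoly d (fun a b => c * f a b)
| hpolyMa d f : hpoly d f -> hpoly (d + 1) (fun a b => a * f a b)
| hpolyMb d f : hpoly d f -> hpoly (d + 1) (fun a b => b * f a b)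
| hpoly_ext d e f g : hpoly d f -> d = e -> f =2 g -> hpoly e g.

Lemma hpolyB d f g : hpoly d f -> hpoly d g -> hpoly d (fun a b => f a b - g a b).
Proof.
by move=> hf hg; apply: hpoly_ext (hpolyD hf (hpolyZ (-1) hg)) _ _ => // a b; ring.
Qed.

Lemma hpolyM_sumsq d f :
  hpoly d f -> hpoly (d + 2) (fun a b => f a b * (a ^+ 2 + b ^+ 2)).
Proof.
move=> hf; apply: hpoly_ext (hpolyD (hpolyMa (hpolyMa hf)) (hpolyMb (hpolyMb hf))) _ _.
  by ring.
by move=> a b; ring.
Qed.

Lemma hpolyMa2 d f : hpoly d f -> hpoly (d + 2) (fun a b => a ^+ 2 * f a b).
Proof.
move=> hf; apply: hpoly_ext (hpolyMa (hpolyMa hf)) _ _; first by ring.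
by move=> a b; ring.
Qed.

Lemma hpoly_bound d f : hpoly d f -> exists2 C : R, 0 <= C &
  forall a b, 0 < a ^+ 2 + b ^+ 2 -> `|f a b| <= C * Num.sqrt (a ^+ 2 + b ^+ 2) ^ d.
Proof.
set s := fun a b : R => Num.sqrt (a ^+ 2 + b ^+ 2).
have mul_coord (a b c : R) (C : R) (e : int) (y : R) : 0 < a ^+ 2 + b ^+ 2 ->
    c = a \/ c = b -> `|y| <= C * s a b ^ e -> `|c * y| <= C * s a b ^ (e + 1).
  move=> ab c_ab y_le; have s_unit : s a b \is a GRing.unit.
    by rewrite unitfE sqrtr_eq0 -ltNge.
  rewrite exprzDr // expr1z normrM mulrA mulrC ler_pM //.
  by rewrite -sqrtr_sqr ler_wsqrtr //; case: c_ab => ->; rewrite ?lerDl ?lerDr sqr_ge0.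
elim=> {d f}.
- by move=> d; exists 0 => // a b _; rewrite normr0 mul0r.
- by exists 1 => // a b _; rewrite expr0z normr1 mulr1.
- move=> d f g _ [C1 C1_ge0 f_le] _ [C2 C2_ge0 g_le].
  exists (C1 + C2) => [|a b ab]; first exact: addr_ge0.
  by rewrite mulrDl (le_trans (ler_normD _ _)) // lerD ?f_le ?g_le.
- move=> d c f _ [C C_ge0 f_le]; exists (`|c| * C) => [|a b ab].
    by rewrite mulr_ge0.
  by rewrite normrM -mulrA ler_wpM2l ?f_le.
- move=> d f _ [C C_ge0 f_le]; exists C => // a b ab.
  by apply: mul_coord; [| left | apply: f_le].
- move=> d f _ [C C_ge0 f_le]; exists C => // a b ab.
  by apply: mul_coord; [| right | apply: f_le].
- by move=> d e f g _ [C C_ge0 f_le] <- fg; exists C => // a b ab; rewrite -fg f_le.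
Qed.

Section Partials.
Variable V : normedModType R.
Implicit Types f g fa fb ga gb : R -> R -> R.

Definition has_partials f fa fb :=
  forall (g h : V -> R) x w dg dh, is_derive x w g dg -> is_derive x w h dh ->
  is_derive x w (fun y => f (g y) (h y)) (fa (g x) (h x) * dg + fb (g x) (h x) * dh).

Lemma has_partials_cst c : has_partials (fun _ _ => c) (fun _ _ => 0) (fun _ _ => 0).
Proof.
move=> g h x w dg dh _ _; apply: is_derive_eq (is_derive_cst c x w) _.
by rewrite !mul0r addr0.
Qed.

Lemma has_partials_snd : has_partials (fun _ b => b) (fun _ _ => 0) (fun _ _ => 1).
Proof. by move=> g h x w dg dh _ dh_h; apply: is_derive_eq dh_h _; ring. Qed.

Lemma has_partialsD f fa fb g ga gb :
  has_partials f fa fb -> has_partials g ga gb ->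
  has_partials (fun a b => f a b + g a b)
               (fun a b => fa a b + ga a b) (fun a b => fb a b + gb a b).
Proof.
move=> df dg g1 h1 x w dg1 dh1 Hg Hh.
have dfg := is_derive_add (df _ _ _ _ _ _ Hg Hh) (dg _ _ _ _ _ _ Hg Hh).
by apply: is_derive_eq dfg _; ring.
Qed.

Lemma has_partialsZ c f fa fb : has_partials f fa fb ->
  has_partials (fun a b => c * f a b) (fun a b => c * fa a b) (fun a b => c * fb a b).
Proof.
move=> df g h x w dg dh Hg Hh.
have dcf := is_derive_mul (is_derive_cst c x w) (df _ _ _ _ _ _ Hg Hh).
by apply: is_derive_eq dcf _ => /=; ring.
Qed.

Lemma has_partialsMa f fa fb : has_partials f fa fb ->
  has_partials (fun a b => a * f a b)
               (fun a b => f a b + a * fa a b) (fun a b => a * fb a b).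
Proof.
move=> df g h x w dg dh Hg Hh.
by apply: is_derive_eq (is_derive_mul Hg (df _ _ _ _ _ _ Hg Hh)) _; ring.
Qed.

Lemma has_partialsMb f fa fb : has_partials f fa fb ->
  has_partials (fun a b => b * f a b)
               (fun a b => b * fa a b) (fun a b => f a b + b * fb a b).
Proof.
move=> df g h x w dg dh Hg Hh.
by apply: is_derive_eq (is_derive_mul Hh (df _ _ _ _ _ _ Hg Hh)) _; ring.
Qed.

Lemma has_partials_ext f g fa fb :
  f =2 g -> has_partials f fa fb -> has_partials g fa fb.
Proof.
move=> fg; suff -> : g = f by exact: id.
by apply/funext => a; apply/funext => b; rewrite fg.
Qed.

Lemma hpoly_partials d f : hpoly d f ->
  exists fa fb, [/\ hpoly (d - 1) fa, hpoly (d - 1) fb & has_partials f fa fb].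
Proof.
elim=> {d f}.
- by move=> d; do 2 eexists; split; last exact: has_partials_cst; exact: hpoly0.
- by do 2 eexists; split; last exact: has_partials_cst; exact: hpoly0.
- move=> d f g _ [fa [fb [fa_h fb_h df]]] _ [ga [gb [ga_h gb_h dg]]].
  by do 2 eexists; split; last apply: has_partialsD df dg; exact: hpolyD.
- move=> d c f _ [fa [fb [fa_h fb_h df]]].
  by do 2 eexists; split; last apply: (has_partialsZ c df); exact: hpolyZ.
- move=> d f f_h [fa [fb [fa_h fb_h df]]].
  do 2 eexists; split; last apply: has_partialsMa df.
  + apply: hpolyD; first by apply: hpoly_ext f_h _ _; first ring.
    by apply: hpoly_ext (hpolyMa fa_h) _ _; first ring.
  + by apply: hpoly_ext (hpolyMa fb_h) _ _; first ring.
- move=> d f f_h [fa [fb [fa_h fb_h df]]].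
  do 2 eexists; split; last apply: has_partialsMb df.
  + by apply: hpoly_ext (hpolyMb fa_h) _ _; first ring.
  + apply: hpolyD; first by apply: hpoly_ext f_h _ _; first ring.
    by apply: hpoly_ext (hpolyMb fb_h) _ _; first ring.
- move=> d e f g _ [fa [fb [fa_h fb_h df]]] <- fg.
  by exists fa, fb; split => //; apply: has_partials_ext df.
Qed.

End Partials.

End HomogeneousPolynomials.

Section SymbolForm.
Variable R : realType.
Implicit Types (P fa fb : R -> R -> R) (x : pt3 R).

Definition symbol_form P (q a1 a2 : nat) x : R :=
  P (xi12 x) (xi3 x) * xi1 x ^+ a2 / (xi1 x ^+ a1 * rho x ^+ q).

Lemma is_derive_symbol_form P fa fb q a1 a2 x w :
  has_partials (pt3 R) P fa fb -> xi1 x != 0 -> rho x != 0 ->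
  is_derive x w (symbol_form P q a1 a2)
    ((fa (xi12 x) (xi3 x) * (xi1 x * xi2 w + xi2 x * xi1 w)
        + fb (xi12 x) (xi3 x) * xi3 w) * xi1 x ^+ a2 / (xi1 x ^+ a1 * rho x ^+ q)
     + symbol_form P q a1 a2 x * ((a2%:R - a1%:R) * xi1 w / xi1 x
         - q%:R * (xi12 x * (xi1 x * xi2 w + xi2 x * xi1 w) + xi3 x * xi3 w)
             / rho x ^+ 2)).
Proof.
move=> dP x0 r0.
have dPx := dP _ _ x w _ _ (is_derive_xi12 x w) (is_derive_xi3 x w).
have dnum := is_derive_mul dPx (is_derive_expn a2 x0 (is_derive_xi1 x w)).
have dden := is_derive_mul (is_derive_expn a1 x0 (is_derive_xi1 x w))
                           (is_derive_expn q r0 (is_derive_rho w r0)).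
have den0 : xi1 x ^+ a1 * rho x ^+ q != 0 by rewrite mulf_neq0 ?expf_neq0.
apply: is_derive_eq (is_derive_mul dnum (is_derive_inv dden den0)) _.
rewrite /symbol_form; field.
by apply/and4P; split; rewrite ?expf_neq0.
Qed.

Lemma derive_symbol_form_e3 P fa fb q a1 a2 x :
  has_partials (pt3 R) P fa fb -> xi1 x != 0 -> rho x != 0 ->
  'D_(e3 R) (symbol_form P q a1 a2) x =
  symbol_form (fun a b => fb a b * (a ^+ 2 + b ^+ 2) - q%:R * (b * P a b)) q.+2 a1 a2 x.
Proof.
move=> dP x0 r0.
rewrite (@derive_val _ _ _ _ _ _ _ (is_derive_symbol_form q a1 a2 (e3 R) dP x0 r0)).
rewrite /symbol_form -rho_sqr [xi1 (e3 R)]/xi1 [xi2 (e3 R)]/xi2 [xi3 (e3 R)]/xi3.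
rewrite /= !exprSr.
by move: x0; rewrite /xi1 => x0; field; rewrite r0 x0 !expf_neq0.
Qed.

Lemma derive_symbol_form_e2 P fa fb q a1 a2 x :
  has_partials (pt3 R) P fa fb -> xi1 x != 0 -> rho x != 0 ->
  'D_(e2 R) (symbol_form P q a1 a2) x =
  symbol_form (fun a b => fa a b * (a ^+ 2 + b ^+ 2) - q%:R * (a * P a b))
    q.+2 a1 a2.+1 x.
Proof.
move=> dP x0 r0.
rewrite (@derive_val _ _ _ _ _ _ _ (is_derive_symbol_form q a1 a2 (e2 R) dP x0 r0)).
rewrite /symbol_form -rho_sqr [xi1 (e2 R)]/xi1 [xi2 (e2 R)]/xi2 [xi3 (e2 R)]/xi3.
rewrite /= !exprSr.
by move: x0; rewrite /xi1 => x0; field; rewrite r0 x0 !expf_neq0.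
Qed.

Lemma derive_symbol_form_e1 P fa fb q a1 a2 x :
  has_partials (pt3 R) P fa fb -> xi1 x != 0 -> rho x != 0 ->
  'D_(e1 R) (symbol_form P q a1 a2) x =
  symbol_form (fun a b => (a * fa a b + (a2%:R - a1%:R) * P a b) * (a ^+ 2 + b ^+ 2)
                          - q%:R * (a ^+ 2 * P a b)) q.+2 a1.+1 a2 x.
Proof.
move=> dP x0 r0.
rewrite (@derive_val _ _ _ _ _ _ _ (is_derive_symbol_form q a1 a2 (e1 R) dP x0 r0)).
rewrite /symbol_form -rho_sqr [xi1 (e1 R)]/xi1 [xi2 (e1 R)]/xi2 [xi3 (e1 R)]/xi3.
rewrite /= !exprSr /xi12.
by move: x0; rewrite /xi1 => x0; field; rewrite r0 x0 !expf_neq0.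
Qed.

End SymbolForm.

Section SymbolEstimates.
Variable R : realType.
Implicit Types (P : R -> R -> R) (f : pt3 R -> R) (y : pt3 R).

Definition has_symbol_form (a1 a2 a3 : nat) f :=
  exists d P q, [/\ hpoly d P, d - q%:Z = - (a2 + a3)%:Z &
    forall y, xi1 y != 0 -> rho y != 0 -> f y = symbol_form P q a1 a2 y].

Lemma symbol_form_m y : m y = symbol_form (fun _ b => b) 1 0 0 y.
Proof. by rewrite /m /symbol_form !expr0 expr1 mulr1 mul1r. Qed.

Lemma has_symbol_form_m : has_symbol_form 0 0 0 (@m R).
Proof.
exists 1, (fun _ b => b), 1%N; split=> // [|y _ _]; last exact: symbol_form_m.
by apply: hpoly_ext (hpolyMb (hpoly1 R)) _ _ => // a b; rewrite mulr1.
Qed.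

Lemma has_symbol_form_pd3 a1 a2 a3 f :
  has_symbol_form a1 a2 a3 f -> has_symbol_form a1 a2 a3.+1 (pd (e3 R) f).
Proof.
case=> d [P [q [P_h dq fE]]]; have [fa [fb [_ fb_h dP]]] := hpoly_partials (pt3 R) P_h.
exists (d + 1), (fun a b => fb a b * (a ^+ 2 + b ^+ 2) - q%:R * (b * P a b)), q.+2.
split; first apply: hpolyB.
- by apply: hpoly_ext (hpolyM_sumsq fb_h) _ _ => //; ring.
- exact/hpolyZ/hpolyMb.
- lia.
- move=> y y0 r0; rewrite /pd (derive_eq_regular _ fE y0 r0).
  by rewrite (derive_symbol_form_e3 _ _ _ dP).
Qed.

Lemma has_symbol_form_pd2 a1 a2 a3 f :
  has_symbol_form a1 a2 a3 f -> has_symbol_form a1 a2.+1 a3 (pd (e2 R) f).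
Proof.
case=> d [P [q [P_h dq fE]]]; have [fa [fb [fa_h _ dP]]] := hpoly_partials (pt3 R) P_h.
exists (d + 1), (fun a b => fa a b * (a ^+ 2 + b ^+ 2) - q%:R * (a * P a b)), q.+2.
split; first apply: hpolyB.
- by apply: hpoly_ext (hpolyM_sumsq fa_h) _ _ => //; ring.
- exact/hpolyZ/hpolyMa.
- lia.
- move=> y y0 r0; rewrite /pd (derive_eq_regular _ fE y0 r0).
  by rewrite (derive_symbol_form_e2 _ _ _ dP).
Qed.

Lemma has_symbol_form_pd1 a1 a2 a3 f :
  has_symbol_form a1 a2 a3 f -> has_symbol_form a1.+1 a2 a3 (pd (e1 R) f).
Proof.
case=> d [P [q [P_h dq fE]]]; have [fa [fb [fa_h _ dP]]] := hpoly_partials (pt3 R) P_h.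
exists (d + 2), (fun a b => (a * fa a b + (a2%:R - a1%:R) * P a b) * (a ^+ 2 + b ^+ 2)
                            - q%:R * (a ^+ 2 * P a b)), q.+2.
split; first apply: hpolyB.
- apply: hpolyM_sumsq; apply: hpolyD; last exact: hpolyZ.
  by apply: hpoly_ext (hpolyMa fa_h) _ _ => //; ring.
- exact/hpolyZ/hpolyMa2.
- lia.
- move=> y y0 r0; rewrite /pd (derive_eq_regular _ fE y0 r0).
  by rewrite (derive_symbol_form_e1 _ _ _ dP).
Qed.

Lemma has_symbol_form_pdalpha a1 a2 a3 :
  has_symbol_form a1 a2 a3 (pdalpha a1 a2 a3 (@m R)).
Proof.
elim: a1 => [|a1 IH]; last exact: has_symbol_form_pd1.
elim: a2 => [|a2 IH]; last exact: has_symbol_form_pd2.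
elim: a3 => [|a3 IH]; last exact: has_symbol_form_pd3.
exact: has_symbol_form_m.
Qed.

Lemma symbol_form_bound d P q a1 a2 a3 :
  hpoly d P -> d - q%:Z = - (a2 + a3)%:Z -> exists2 C : R, 0 < C &
  forall x, xi1 x != 0 -> rho x != 0 ->
    `|symbol_form P q a1 a2 x| <= C * `|xi1 x| ^ (a2%:Z - a1%:Z) * rho x ^- (a2 + a3).
Proof.
move=> P_h dq; have [C C_ge0 P_le] := hpoly_bound P_h.
exists (C + 1) => [|x x0 r0]; first by lra.
have rx_gt0 := rho_gt0 r0; have x1_gt0 : 0 < `|xi1 x| by rewrite normr_gt0.
have P_le' : `|P (xi12 x) (xi3 x)| <= (C + 1) * rho x ^ d.
  rewrite (le_trans (P_le _ _ _)) -?rho_sqr ?exprn_gt0 //.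
  rewrite sqrtr_sqr (ger0_norm (ltW rx_gt0)).
  by rewrite ler_pM2r ?exprz_gt0 // lerDl.
have xi1E : `|xi1 x| ^ (a2%:Z - a1%:Z) = `|xi1 x| ^+ a2 / `|xi1 x| ^+ a1.
  by rewrite exprzDr ?unitfE ?gt_eqF // -invr_expz.
have rhoqE : rho x ^- (a2 + a3) = rho x ^ d / rho x ^+ q.
  rewrite (exprnP (rho x) q) invr_expz -exprzDr ?unitfE ?gt_eqF //.
  by rewrite dq -invr_expz.
rewrite /symbol_form normrM normfV !normrM !normrX (ger0_norm (ltW rx_gt0)) xi1E rhoqE.
rewrite -mulrA [X in _ <= X](_ : _ = (C + 1) * rho x ^ d *
    (`|xi1 x| ^+ a2 / (`|xi1 x| ^+ a1 * rho x ^+ q))); last first.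
  by field; rewrite !expf_neq0 ?gt_eqF.
by apply: ler_wpM2r; rewrite // divr_ge0 ?mulr_ge0 ?exprn_ge0 ?ltW.
Qed.

End SymbolEstimates.

Section Unboundedness.
Variable R : realType.
Local Open Scope classical_set_scope.
Implicit Types (f : pt3 R -> R) (x : pt3 R).

Lemma not_ess_bounded_of_boxes f :
  (forall M : R, exists a1 b1 a2 b2 a3 b3 : R, [/\ a1 < b1, a2 < b2, a3 < b3 &
     forall x, a1 < xi1 x < b1 -> a2 < xi2 x < b2 -> a3 < xi3 x < b3 -> M < `|f x|]) ->
  ~ ess_bounded f.
Proof.
move=> big [M [A [mA A0 sA]]].
have [a1 [b1 [a2 [b2 [a3 [b3 [l1 l2 l3 f_big]]]]]]] := big M.
pose I1 := [set` `]a1, b1[%R]; pose I2 := [set` `]a2, b2[%R].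
pose I3 := [set` `]a3, b3[%R].
have mI (a b : R) : measurable [set` `]a, b[%R] by exact: measurable_itv.
have BA : I1 `*` I2 `*` I3 `<=` A.
  move=> x [[/= x1 x2] x3]; apply: sA => /= fx_le.
  move: x1 x2 x3; rewrite /I1 /I2 /I3 /= !in_itv /= => x1 x2 x3.
  by have := f_big x x1 x2 x3; rewrite ltNge fx_le.
have : (leb3 (I1 `*` I2 `*` I3) <= leb3 A)%E.
  apply: (le_measure (leb3 (R := R))) BA; rewrite inE //.
  by apply: measurableX; [apply: measurableX|]; exact: mI.
have -> : leb3 (I1 `*` I2 `*` I3) =
    ((@lebesgue_measure R \x @lebesgue_measure R) (I1 `*` I2) * lebesgue_measure I3)%E.
  by rewrite /leb3 product_measure1E //; [apply: measurableX; apply: mI | apply: mI].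
have -> : (@lebesgue_measure R \x @lebesgue_measure R)%E (I1 `*` I2) =
    (lebesgue_measure I1 * lebesgue_measure I2)%E.
  by rewrite product_measure1E //; apply: mI.
rewrite A0 !lebesgue_measure_itv /= !lte_fin l1 l2 l3 /= -!EFinD -!EFinM lee_fin.
by apply/negP; rewrite -ltNge !mulr_gt0 // subr_gt0.
Qed.

Lemma not_ess_bounded_blowup f (s1 s2 : R -> R) :
  (forall t, 0 < t -> [/\ 0 < s1 t, 0 < s2 t & s1 t * s2 t = t]) ->
  (forall t x, 0 < t -> s1 t < xi1 x < 2 * s1 t -> t < xi12 x -> t < xi3 x ->
     rho x != 0 -> t ^+ 2 / 2 <= `|f x * rho x ^+ 3|) ->
  ~ ess_bounded f.
Proof.
move=> s_pos f_big; apply: not_ess_bounded_of_boxes => M.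
(* (t^2 / 2) / (5 t)^3 = 1 / (250 t) = |M| + 1 *)
pose t := (250 * (`|M| + 1))^-1.
have M1_gt0 : 0 < `|M| + 1 by rewrite ltr_wpDl.
have t_gt0 : 0 < t by rewrite invr_gt0 mulr_gt0.
have [s1_gt0 s2_gt0 s12] := s_pos t t_gt0.
exists (s1 t), (2 * s1 t), (s2 t), (2 * s2 t), t, (2 * t); split; try lra.
move=> x x1_in /andP[l2 u2] /andP[l3 u3]; have /andP[l1 u1] := x1_in.
have u_gt : t < xi12 x by rewrite /xi12 -s12; nra.
have u_lt : xi12 x < 4 * t by rewrite /xi12 -s12; nra.
have r0 : rho x != 0 by rewrite -sqrf_eq0 rho_sqr; apply: lt0r_neq0; nra.
have r_gt0 := rho_gt0 r0.
have r_lt : rho x < 5 * t by have := rho_sqr x; nra.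
have := f_big t x t_gt0 x1_in u_gt l3 r0.
rewrite normrM (gtr0_norm (exprn_gt0 3 r_gt0)) => f_ge.
have : (`|M| + 1) * rho x ^+ 3 < t ^+ 2 / 2.
  have -> : t ^+ 2 / 2 = (`|M| + 1) * (5 * t) ^+ 3 by rewrite /t; field; lra.
  by rewrite ltr_pM2l // ltrXn2r ?ltW.
move=> /lt_le_trans /(_ f_ge); rewrite ltr_pM2r ?exprn_gt0 //.
by have := ler_norm M; lra.
Qed.

Lemma pd_m_e3 x : xi1 x != 0 -> rho x != 0 ->
  pd (e3 R) (@m R) x * rho x ^+ 3 = xi12 x ^+ 2.
Proof.
move=> x0 r0; rewrite /pd (derive_eq_regular _ (fun y _ _ => symbol_form_m y) x0 r0).
rewrite (derive_symbol_form_e3 _ _ _ (@has_partials_snd R (pt3 R)) x0 r0) /symbol_form.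
by field; rewrite r0.
Qed.

Lemma pd_m_e2 x : xi1 x != 0 -> rho x != 0 ->
  pd (e2 R) (@m R) x * rho x ^+ 3 = - (xi12 x * xi3 x * xi1 x).
Proof.
move=> x0 r0; rewrite /pd (derive_eq_regular _ (fun y _ _ => symbol_form_m y) x0 r0).
rewrite (derive_symbol_form_e2 _ _ _ (@has_partials_snd R (pt3 R)) x0 r0) /symbol_form.
by field; rewrite r0.
Qed.

Lemma pd_m_e1 x : xi1 x != 0 -> rho x != 0 ->
  pd (e1 R) (@m R) x * rho x ^+ 3 = - (xi12 x ^+ 2 * xi3 x) / xi1 x.
Proof.
move=> x0 r0; rewrite /pd (derive_eq_regular _ (fun y _ _ => symbol_form_m y) x0 r0).
rewrite (derive_symbol_form_e1 _ _ _ (@has_partials_snd R (pt3 R)) x0 r0) /symbol_form.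
by move: x0; rewrite /xi1 => x0; field; rewrite r0 x0.
Qed.

Lemma pd_m_e3_unbounded : ~ ess_bounded (pd (e3 R) (@m R)).
Proof.
apply: (@not_ess_bounded_blowup _ (fun _ => 1) id) => [t t_gt0|t x t_gt0].
  by split; rewrite ?mul1r.
move=> /andP[l1 _] u_gt _ r0; rewrite pd_m_e3 ?r0 ?lt0r_neq0 //; last lra.
rewrite ger0_norm ?sqr_ge0 //; nra.
Qed.

Lemma pd_m_e2_unbounded : ~ ess_bounded (pd (e2 R) (@m R)).
Proof.
apply: (@not_ess_bounded_blowup _ (fun _ => 1) id) => [t t_gt0|t x t_gt0].
  by split; rewrite ?mul1r.
move=> /andP[l1 _] u_gt v_gt r0; rewrite pd_m_e2 ?r0 ?lt0r_neq0 //; last lra.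
have uv : t ^+ 2 < xi12 x * xi3 x by rewrite expr2 ltr_pM //; lra.
have uv_ge0 : 0 <= xi12 x * xi3 x by rewrite (le_trans _ (ltW uv)) ?sqr_ge0.
have uvx : xi12 x * xi3 x <= xi12 x * xi3 x * xi1 x by rewrite ler_peMr //; lra.
rewrite normrN ger0_norm ?(le_trans uv_ge0 uvx) //; have := sqr_ge0 t; lra.
Qed.

Lemma pd_m_e1_unbounded : ~ ess_bounded (pd (e1 R) (@m R)).
Proof.
apply: (@not_ess_bounded_blowup _ id (fun _ => 1)) => [t t_gt0|t x t_gt0].
  by split; rewrite ?mulr1.
move=> /andP[l1 u1] u_gt v_gt r0; rewrite pd_m_e1 ?r0 ?lt0r_neq0 //; last lra.
have u2v : t ^+ 2 * t < xi12 x ^+ 2 * xi3 x.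
  by rewrite ltr_pM ?exprn_ge0 ?ltrXn2r ?ltW.
have t3_ge0 : 0 <= t ^+ 2 * t by rewrite mulr_ge0 ?sqr_ge0 ?ltW.
rewrite normrM normrN normfV !ger0_norm ?ler_pdivlMr; try lra.
by have := sqr_ge0 t; nra.
Qed.

End Unboundedness.

Theorem mainTheorem8 (R : realType) :
  (forall a1 a2 a3 : nat, exists C : R, 0 < C /\
     forall x : pt3 R, xi1 x != 0 -> rho x != 0 ->
       `|pdalpha a1 a2 a3 (@m R) x|
         <= C * `|xi1 x| ^ (a2%:Z - a1%:Z) * rho x ^- (a2 + a3)) /\
  ~ ess_bounded (pd (e1 R) (@m R)) /\
  ~ ess_bounded (pd (e2 R) (@m R)) /\
  ~ ess_bounded (pd (e3 R) (@m R)).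
Proof.
split.
  move=> a1 a2 a3; have [d [P [q [P_h dq fE]]]] := has_symbol_form_pdalpha R a1 a2 a3.
  have [C C_gt0 P_bound] := symbol_form_bound a1 P_h dq.
  by exists C; split => // x x0 r0; rewrite fE ?P_bound.
split; first exact: pd_m_e1_unbounded.
by split; [exact: pd_m_e2_unbounded | exact: pd_m_e3_unbounded].
Qed.
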